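(* Let $f(x)=1-|1-2x|$ be the tent map, let $g:[0,1]\to[0,1]$ be a piecewise linear unimodal map, and let $h:[0,1]\to[0,1]$ be a homeomorphism with $h\circ f=g\circ h$. Let $\psi:[0,1]\to[0,1]$ be a continuous non-constant map with $g\circ\psi=\psi\circ g$, and suppose $[0,1]$ splits into exactly $t\ge 1$ maximal intervals of monotonicity of $\psi$. Then $\psi=h\circ\xi_t\circ h^{-1}$, where $$\xi_t(x)=\frac{1-(-1)^{[tx]}}{2}+(-1)^{[tx]}\{tx\},\quad x\in[0,1].$$
   Context: $[\cdot]$ denotes the integer part and $\{\cdot\}$ the fractional part of a real number; thus $\xi_t$ is the continuous piecewise linear map with $\xi_t(0)=0$, slopes $\pm t$, and all kinks at the points $j/t$, where it alternately takes the values $1$ and $0$. A map $g:[0,1]\to[0,1]$ is called unimodal if there is $v\in(0,1)$ such that $g$ is increasing on $[0,v]$, decreasing on $[v,1]$, and $g(0)=g(1)=0$, $g(v)=1$. *)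

From Stdlib Require Import Reals Lra Lia.
Open Scope R_scope.

Definition I01 (x : R) : Prop := 0 <= x <= 1.

Definition tent (x : R) : R := 1 - Rabs (1 - 2 * x).

Definition xi (t : nat) (x : R) : R :=
  let k := Int_part (INR t * x) in
  (1 - powerRZ (-1) k) / 2 + powerRZ (-1) k * frac_part (INR t * x).

Definition continuous_on01 (f : R -> R) : Prop :=
  forall x, I01 x -> forall eps, 0 < eps ->
    exists delta, 0 < delta /\
      forall y, I01 y -> Rabs (y - x) < delta -> Rabs (f y - f x) < eps.

Definition maps01 (f : R -> R) : Prop := forall x, I01 x -> I01 (f x).

Definition homeo01 (h hinv : R -> R) : Prop :=
  maps01 h /\ maps01 hinv /\
  (forall x, I01 x -> hinv (h x) = x) /\
  (forall y, I01 y -> h (hinv y) = y) /\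
  continuous_on01 h /\ continuous_on01 hinv.

Definition nondecr_on (f : R -> R) (a b : R) : Prop :=
  forall x y, a <= x -> x <= y -> y <= b -> f x <= f y.
Definition nonincr_on (f : R -> R) (a b : R) : Prop :=
  forall x y, a <= x -> x <= y -> y <= b -> f y <= f x.
Definition monotone_on (f : R -> R) (a b : R) : Prop :=
  nondecr_on f a b \/ nonincr_on f a b.

Definition unimodal (g : R -> R) : Prop :=
  exists v, 0 < v < 1 /\ nondecr_on g 0 v /\ nonincr_on g v 1 /\
    g 0 = 0 /\ g 1 = 0 /\ g v = 1.

Definition piecewise_linear01 (g : R -> R) : Prop :=
  exists (n : nat) (a : nat -> R),
    a 0%nat = 0 /\ a n = 1 /\
    (forall i, (i < n)%nat -> a i < a (S i)) /\
    (forall i, (i < n)%nat -> exists m c, forall x,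
        a i <= x <= a (S i) -> g x = m * x + c).

Definition monotone_laps (psi : R -> R) (t : nat) : Prop :=
  exists b : nat -> R,
    b 0%nat = 0 /\ b t = 1 /\
    (forall i, (i < t)%nat -> b i < b (S i)) /\
    (forall i, (i < t)%nat -> monotone_on psi (b i) (b (S i))) /\
    (forall i, (S i < t)%nat -> ~ monotone_on psi (b i) (b (S (S i)))).

(* Conjugating by h reduces everything to the tent map: phi = h^-1 o psi o h is a
   continuous non-constant self-map of [0,1] commuting with the tent map and having
   t maximal laps, and the claim becomes phi x = xi_t x = zigzag (t x), where the
   zigzag (the distance to the nearest even integer) satisfies
   zigzag (2 y) = tent (zigzag y).  For such a phi:
   - a plateau of phi would spread under the tent map to all of [0,1], so phi has
     none; this forces phi 0 = 0 and makes phi strictly increasing near 0, where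
     commutation reads phi (2 y) = 2 phi y;
   - rescaling by a small power of 2 yields an increasing lift L of phi through the
     zigzag; uniqueness of such lifts gives L w + L (1 - w) = L 1, which together
     with L (2 w) = 2 L w forces L linear, so phi = zigzag (n .) with n = L 1;
   - the maximal laps of zigzag (n .) are the n intervals [k/n, (k+1)/n], so n = t. *)

From Stdlib Require Import Reals Lra Lia Classical.
Open Scope R_scope.

(* The zigzag: y |-> distance from y to the nearest even integer, for y >= 0.
   It is the "unfolding" of the tent map to the half line, and xi_t = zigzag(t.). *)
Definition zigzag (y : R) : R :=
  (1 - powerRZ (-1) (Int_part y)) / 2 + powerRZ (-1) (Int_part y) * frac_part y.

Lemma xi_zigzag t x : xi t x = zigzag (INR t * x).
Proof. reflexivity. Qed.

Lemma neg_one_pow_parity n : (-1) ^ n = if Nat.even n then 1 else -1.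
Proof.
  induction n as [|n IH]; simpl pow; [reflexivity|].
  rewrite IH, Nat.even_succ, <- Nat.negb_even.
  destruct (Nat.even n); simpl; ring.
Qed.

Lemma Int_part_nat (j : nat) y : INR j <= y < INR j + 1 -> Int_part y = Z.of_nat j.
Proof.
  intros H. unfold Int_part.
  rewrite <- (tech_up y (Z.of_nat j + 1)); [ring| |];
    rewrite plus_IZR, <- INR_IZR_INZ; simpl; lra.
Qed.

Lemma zigzag_on_lap (j : nat) y : INR j <= y <= INR j + 1 ->
  zigzag y = if Nat.even j then y - INR j else INR j + 1 - y.
Proof.
  intros [Hlo Hhi]. unfold zigzag, frac_part.
  destruct (Rlt_or_le y (INR j + 1)).
  - rewrite (Int_part_nat j y) by lra.
    rewrite <- pow_powerRZ, <- INR_IZR_INZ, neg_one_pow_parity.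
    destruct (Nat.even j); field.
  - assert (Ey : y = INR (S j)) by (rewrite S_INR; lra). subst y.
    rewrite (Int_part_nat (S j)) by (rewrite S_INR; lra).
    rewrite <- pow_powerRZ, <- INR_IZR_INZ, neg_one_pow_parity, Nat.even_succ,
      <- Nat.negb_even, S_INR.
    destruct (Nat.even j); simpl; field.
Qed.

Lemma nat_floor_exists y : 0 <= y -> exists j : nat, INR j <= y < INR j + 1.
Proof.
  intros Hy. destruct (base_Int_part y) as [H1 H2].
  assert (Hz : (0 <= Int_part y)%Z).
  { assert (Hgt : -1 < IZR (Int_part y)) by lra. apply lt_IZR in Hgt. lia. }
  exists (Z.to_nat (Int_part y)).
  rewrite INR_IZR_INZ, Znat.Z2Nat.id by exact Hz. lra.
Qed.

Lemma zigzag_id01 y : 0 <= y <= 1 -> zigzag y = y.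
Proof. intros H. rewrite (zigzag_on_lap 0) by (simpl; lra). simpl. ring. Qed.

Lemma zigzag_at_nat n : zigzag (INR n) = 0 \/ zigzag (INR n) = 1.
Proof.
  rewrite (zigzag_on_lap n) by lra. destruct (Nat.even n); [left|right]; ring.
Qed.

Lemma zigzag_interior (j : nat) y : INR j < y < INR j + 1 -> 0 < zigzag y < 1.
Proof.
  intros H. rewrite (zigzag_on_lap j) by lra. destruct (Nat.even j); lra.
Qed.

Lemma zigzag_extreme_at_nat y : 0 <= y -> zigzag y = 0 \/ zigzag y = 1 ->
  exists n, y = INR n.
Proof.
  intros Hy HT. destruct (nat_floor_exists y Hy) as [j Hj].
  rewrite (zigzag_on_lap j) in HT by lra.
  destruct (Nat.even j); destruct HT as [HT|HT];
    first [ exists j; lra | exists (S j); rewrite S_INR; lra ].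
Qed.

Lemma zigzag_inj_on_lap (j : nat) y z : INR j <= y <= INR j + 1 ->
  INR j <= z <= INR j + 1 -> zigzag y = zigzag z -> y = z.
Proof.
  intros Hy Hz. rewrite (zigzag_on_lap j y Hy), (zigzag_on_lap j z Hz).
  destruct (Nat.even j); lra.
Qed.

Lemma zigzag_double y : 0 <= y -> zigzag (2 * y) = tent (zigzag y).
Proof.
  intros Hy. destruct (nat_floor_exists y Hy) as [j Hj].
  rewrite (zigzag_on_lap j y) by lra. unfold tent.
  destruct (Rle_or_lt y (INR j + /2)).
  - rewrite (zigzag_on_lap (2 * j)) by (rewrite mult_INR; simpl; lra).
    rewrite Nat.even_even, mult_INR. simpl (INR 2).
    destruct (Nat.even j); unfold Rabs; destruct Rcase_abs; lra.
  - rewrite (zigzag_on_lap (2 * j + 1)) by (rewrite plus_INR, mult_INR; simpl; lra).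
    rewrite Nat.even_odd, plus_INR, mult_INR. simpl (INR 2). simpl (INR 1).
    destruct (Nat.even j); unfold Rabs; destruct Rcase_abs; lra.
Qed.

Lemma zigzag_reflect n y : 0 <= y <= 2 * INR n -> zigzag (2 * INR n - y) = zigzag y.
Proof.
  intros Hy. destruct (nat_floor_exists y (proj1 Hy)) as [j Hj].
  destruct (Nat.lt_ge_cases j (2 * n)) as [Hl|Hg].
  - assert (Hj' : INR (2 * n - j - 1) = 2 * INR n - INR j - 1).
    { rewrite !minus_INR by lia. rewrite mult_INR. simpl. ring. }
    assert (Hpar : Nat.even (2 * n - j - 1) = negb (Nat.even j)).
    { assert (Hsum : Nat.even ((2 * n - j - 1) + (j + 1)) = true).
      { replace ((2 * n - j - 1) + (j + 1))%nat with (2 * n)%nat by lia.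
        apply Nat.even_even. }
      rewrite Nat.even_add, Nat.add_1_r, Nat.even_succ, <- Nat.negb_even in Hsum.
      destruct (Nat.even (2 * n - j - 1)), (Nat.even j); simpl in *; congruence. }
    rewrite (zigzag_on_lap (2 * n - j - 1)) by (rewrite Hj'; lra).
    rewrite (zigzag_on_lap j) by lra. rewrite Hpar, Hj'.
    destruct (Nat.even j); simpl; ring.
  - apply le_INR in Hg. rewrite mult_INR in Hg. simpl in Hg.
    assert (y = 2 * INR n) by lra. subst y.
    replace (2 * INR n - 2 * INR n) with 0 by ring.
    rewrite zigzag_id01 by lra.
    replace (2 * INR n) with (INR (2 * n)) by (rewrite mult_INR; simpl; ring).
    rewrite (zigzag_on_lap (2 * n)) by lra. rewrite Nat.even_even. ring.
Qed.

(* Continuity on [0,1].  Clamping extends a map continuous on [0,1] to a globally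
   continuous one, which gives access to the intermediate value theorem. *)
Definition clamp (x : R) : R := Rmax 0 (Rmin 1 x).

Lemma clamp_in x : I01 (clamp x).
Proof. unfold clamp, I01, Rmax, Rmin. repeat destruct Rle_dec; lra. Qed.

Lemma clamp_id x : I01 x -> clamp x = x.
Proof. unfold clamp, I01, Rmax, Rmin. intros. repeat destruct Rle_dec; lra. Qed.

Lemma clamp_lipschitz x y : Rabs (clamp y - clamp x) <= Rabs (y - x).
Proof.
  unfold clamp, Rmax, Rmin. repeat destruct Rle_dec;
    unfold Rabs; repeat destruct Rcase_abs; lra.
Qed.

Lemma continuity_clamp F : continuous_on01 F -> continuity (fun x => F (clamp x)).
Proof.
  intros HF x eps Heps. destruct (HF (clamp x) (clamp_in x) eps Heps) as [d [Hd Hclose]].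
  exists d. split; [exact Hd|]. intros y [_ Hy]. simpl in *. unfold R_dist in *.
  apply Hclose; [apply clamp_in|]. eapply Rle_lt_trans; [apply clamp_lipschitz|exact Hy].
Qed.

Lemma IVT01 F a b y : continuous_on01 F -> 0 <= a <= b -> b <= 1 ->
  F a <= y <= F b -> exists c, a <= c <= b /\ F c = y.
Proof.
  intros HF Hab Hb Hy.
  destruct (Req_dec (F a) y) as [E|E]; [exists a; split; [lra|exact E]|].
  destruct (Req_dec (F b) y) as [E'|E']; [exists b; split; [lra|exact E']|].
  assert (Hlt : a < b) by (destruct (Req_dec a b); [subst; lra|lra]).
  set (G := fun x => F (clamp x) - y).
  assert (HG : continuity G).
  { apply continuity_minus; [apply continuity_clamp, HF|apply continuity_const; now intros]. }
  assert (Ga : G a = F a - y) by (unfold G; rewrite clamp_id by (unfold I01; lra); lra).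
  assert (Gb : G b = F b - y) by (unfold G; rewrite clamp_id by (unfold I01; lra); lra).
  destruct (IVT G a b HG Hlt) as [z [Hz Gz]]; [lra|lra|].
  exists z. split; [exact Hz|].
  unfold G in Gz. rewrite clamp_id in Gz by (unfold I01; lra). lra.
Qed.

Lemma continuous_on01_ext F G : continuous_on01 F ->
  (forall x, I01 x -> G x = F x) -> continuous_on01 G.
Proof.
  intros HF E x Hx eps Heps. destruct (HF x Hx eps Heps) as [d [Hd Hclose]].
  exists d. split; [exact Hd|]. intros y Hy Hyx. rewrite !E by assumption. auto.
Qed.

Lemma continuous_on01_comp F G : continuous_on01 F -> continuous_on01 G -> maps01 G ->
  continuous_on01 (fun x => F (G x)).
Proof.
  intros HF HG HGm x Hx eps Heps.
  destruct (HF (G x) (HGm x Hx) eps Heps) as [d [Hd Hclose]].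
  destruct (HG x Hx d Hd) as [d' [Hd' Hclose']].
  exists d'. split; [exact Hd'|]. intros y Hy Hyx. apply Hclose; auto.
Qed.

Lemma continuous_on01_affine F a b c d : continuous_on01 F ->
  (forall u, I01 u -> I01 (a * u + b)) ->
  continuous_on01 (fun u => c + d * F (a * u + b)).
Proof.
  intros HF Hab x Hx eps Heps.
  pose proof (Rabs_pos a) as Ha. pose proof (Rabs_pos d) as Hd.
  set (e := eps / (Rabs d + 1)).
  assert (He : 0 < e) by (unfold e; apply Rdiv_lt_0_compat; lra).
  destruct (HF (a * x + b) (Hab x Hx) e He) as [d1 [Hd1 Hclose]].
  exists (d1 / (Rabs a + 1)). split; [apply Rdiv_lt_0_compat; lra|].
  intros y Hy Hyx.
  assert (Hk : Rabs (F (a * y + b) - F (a * x + b)) < e).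
  { apply Hclose; [apply Hab, Hy|].
    replace (a * y + b - (a * x + b)) with (a * (y - x)) by ring. rewrite Rabs_mult.
    pose proof (Rabs_pos (y - x)).
    apply Rle_lt_trans with ((Rabs a + 1) * Rabs (y - x)); [nra|].
    apply (Rmult_lt_compat_l (Rabs a + 1)) in Hyx; [|lra].
    replace ((Rabs a + 1) * (d1 / (Rabs a + 1))) with d1 in Hyx by (field; lra).
    exact Hyx. }
  replace (c + d * F (a * y + b) - (c + d * F (a * x + b)))
    with (d * (F (a * y + b) - F (a * x + b))) by ring.
  rewrite Rabs_mult. pose proof (Rabs_pos (F (a * y + b) - F (a * x + b))).
  apply Rle_lt_trans with ((Rabs d + 1) * Rabs (F (a * y + b) - F (a * x + b))); [nra|].
  apply (Rmult_lt_compat_l (Rabs d + 1)) in Hk; [|lra].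
  unfold e in Hk. replace ((Rabs d + 1) * (eps / (Rabs d + 1))) with eps in Hk by (field; lra).
  exact Hk.
Qed.

Definition strictly_increasing01 (F : R -> R) : Prop :=
  forall x y, 0 <= x -> x < y -> y <= 1 -> F x < F y.

Lemma strictly_increasing01_le F x y : strictly_increasing01 F ->
  0 <= x -> x <= y -> y <= 1 -> F x <= F y.
Proof.
  intros HF ? ? ?. destruct (Req_dec x y) as [->|]; [lra|]. left; apply HF; lra.
Qed.

(* A continuous injective map of [0,1] with F 0 < F 1 is strictly increasing:
   otherwise the intermediate value theorem would produce a second preimage. *)
Lemma injective_increasing F : continuous_on01 F ->
  (forall x y, I01 x -> I01 y -> F x = F y -> x = y) -> F 0 < F 1 ->
  strictly_increasing01 F.
Proof.
  intros HF Hinj H01.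
  assert (between : forall a b z, 0 <= a -> a < z -> z < b -> b <= 1 ->
            F a < F b -> F a < F z < F b).
  { intros a b z Ha Haz Hzb Hb Hab. split.
    - destruct (Rlt_or_le (F a) (F z)) as [|Hle]; [assumption|].
      destruct (IVT01 F z b (F a) HF) as [c [Hc Fc]]; try lra.
      apply Hinj in Fc; unfold I01; lra.
    - destruct (Rlt_or_le (F z) (F b)) as [|Hle]; [assumption|].
      destruct (IVT01 F a z (F b) HF) as [c [Hc Fc]]; try lra.
      apply Hinj in Fc; unfold I01; lra. }
  intros x y Hx Hxy Hy.
  destruct (Req_dec x 0) as [->|Hx0].
  - destruct (Req_dec y 1) as [->|Hy1]; [exact H01|]. apply (between 0 1 y); lra.
  - destruct (Req_dec y 1) as [->|Hy1]; [apply (between 0 1 x); lra|].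
    assert (F 0 < F y) by (apply (between 0 1 y); lra).
    apply (between 0 y x); lra.
Qed.

Lemma monotone_on_ext F G p q : (forall x, p <= x <= q -> F x = G x) ->
  monotone_on F p q -> monotone_on G p q.
Proof.
  intros E [Hm|Hm]; [left|right]; intros x y Hx Hxy Hy;
    rewrite <- !E by lra; apply Hm; lra.
Qed.

Lemma monotone_on_comp F G H a b p q : nondecr_on H a b ->
  (forall x, a <= x <= b -> p <= H x <= q) -> nondecr_on G 0 1 ->
  (forall x, p <= x <= q -> I01 (F x)) -> monotone_on F p q ->
  monotone_on (fun x => G (F (H x))) a b.
Proof.
  intros HH Hrange HG HF [Hm|Hm]; [left|right]; intros x y Hx Hxy Hy;
    pose proof (Hrange x ltac:(lra)); pose proof (Hrange y ltac:(lra));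
    assert (H x <= H y) by (apply HH; lra).
  - pose proof (HF (H x) ltac:(lra)). pose proof (HF (H y) ltac:(lra)).
    unfold I01 in *. apply HG; [lra| apply Hm; lra |lra].
  - pose proof (HF (H x) ltac:(lra)). pose proof (HF (H y) ltac:(lra)).
    unfold I01 in *. apply HG; [lra| apply Hm; lra |lra].
Qed.

Lemma partition_mono (b : nat -> R) t : (forall i, (i < t)%nat -> b i < b (S i)) ->
  forall i j, (i <= j)%nat -> (j <= t)%nat -> b i <= b j.
Proof.
  intros Hinc i j Hij. induction Hij as [|m Hij IH]; intros Hj; [lra|].
  assert (b m < b (S m)) by (apply Hinc; lia). specialize (IH ltac:(lia)). lra.
Qed.

Lemma partition_in01 (b : nat -> R) t : b 0%nat = 0 -> b t = 1 ->
  (forall i, (i < t)%nat -> b i < b (S i)) -> forall i, (i <= t)%nat -> 0 <= b i <= 1.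
Proof.
  intros b0 bt Hinc i Hi. split.
  - rewrite <- b0. apply (partition_mono b t Hinc); lia.
  - rewrite <- bt. apply (partition_mono b t Hinc); lia.
Qed.

(* A homeomorphism conjugating the tent map to a map g with g 0 = 0 is increasing:
   a decreasing one would send the fixed point 0 of the tent map to 1 and force
   h 0 = h (tent 1) = g (h 1) = g 0 = 0. *)
Lemma conjugacy_increasing g h hinv : homeo01 h hinv -> g 0 = 0 ->
  (forall x, I01 x -> h (tent x) = g (h x)) -> strictly_increasing01 h.
Proof.
  intros [h_maps [hinv_maps [hinv_h [h_hinv [h_cont _]]]]] g0 Hconj.
  assert (I0 : I01 0) by (unfold I01; lra).
  assert (I1 : I01 1) by (unfold I01; lra).
  assert (h_inj : forall x y, I01 x -> I01 y -> h x = h y -> x = y).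
  { intros x y Hx Hy E. rewrite <- (hinv_h x Hx), <- (hinv_h y Hy), E. reflexivity. }
  destruct (Rtotal_order (h 0) (h 1)) as [H01|[E|H10]].
  - apply injective_increasing; auto.
  - apply h_inj in E; auto. lra.
  - exfalso.
    assert (neg_incr : strictly_increasing01 (fun x => - h x)).
    { apply injective_increasing; [|intros x y Hx Hy E; apply h_inj; auto; lra|lra].
      apply (continuous_on01_ext (fun x => 0 + (-1) * h (1 * x + 0))).
      - apply continuous_on01_affine; [exact h_cont|].
        intros u Hu. replace (1 * u + 0) with u by ring. exact Hu.
      - intros x _. replace (1 * x + 0) with x by ring. ring. }
    pose proof (hinv_maps 0 I0) as Hi0. pose proof (h_maps 1 I1) as Hh1. unfold I01 in *.
    assert (Hle : h 1 <= h (hinv 0)).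
    { destruct (Req_dec (hinv 0) 1) as [E|Hne]; [rewrite E; lra|].
      pose proof (neg_incr (hinv 0) 1 ltac:(lra) ltac:(lra) ltac:(lra)). lra. }
    rewrite h_hinv in Hle by exact I0.
    assert (h 0 = 0).
    { replace 0 with (tent 1) at 1 by (unfold tent; rewrite Rabs_left; lra).
      rewrite Hconj by exact I1. replace (h 1) with 0 by lra. exact g0. }
    lra.
Qed.

Lemma tent_maps01 : maps01 tent.
Proof. unfold maps01, I01, tent, Rabs. intros. destruct Rcase_abs; lra. Qed.

Definition commutes_with_tent (phi : R -> R) : Prop :=
  forall x, I01 x -> tent (phi x) = phi (tent x).

Lemma conj_commutes g h hinv psi : homeo01 h hinv -> maps01 psi ->
  (forall x, I01 x -> h (tent x) = g (h x)) ->
  (forall x, I01 x -> g (psi x) = psi (g x)) ->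
  commutes_with_tent (fun y => hinv (psi (h y))).
Proof.
  intros [h_maps [hinv_maps [hinv_h [h_hinv _]]]] Hpsi Hconj Hcomm y Hy.
  assert (Iz : I01 (psi (h y))) by auto.
  rewrite Hconj, <- Hcomm by auto.
  rewrite <- (h_hinv (psi (h y))) at 2 by exact Iz.
  rewrite <- Hconj by auto. rewrite hinv_h; [reflexivity|].
  apply tent_maps01; auto.
Qed.

Section IncreasingHomeomorphism.

Variables h hinv : R -> R.
Hypothesis h_maps : maps01 h.
Hypothesis hinv_maps : maps01 hinv.
Hypothesis hinv_h : forall x, I01 x -> hinv (h x) = x.
Hypothesis h_hinv : forall y, I01 y -> h (hinv y) = y.
Hypothesis h_incr : strictly_increasing01 h.

Lemma homeo_fixes_0 : h 0 = 0 /\ hinv 0 = 0.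
Proof.
  assert (I0 : I01 0) by (unfold I01; lra).
  pose proof (h_maps 0 I0). pose proof (hinv_maps 0 I0). unfold I01 in *.
  assert (Hle : h 0 <= h (hinv 0)) by (apply strictly_increasing01_le; auto; lra).
  rewrite h_hinv in Hle by exact I0.
  assert (E : h 0 = 0) by lra. split; [exact E|].
  rewrite <- E at 1. apply hinv_h, I0.
Qed.

Lemma homeo_fixes_1 : h 1 = 1 /\ hinv 1 = 1.
Proof.
  assert (I1 : I01 1) by (unfold I01; lra).
  pose proof (h_maps 1 I1). pose proof (hinv_maps 1 I1). unfold I01 in *.
  assert (Hle : h (hinv 1) <= h 1) by (apply strictly_increasing01_le; auto; lra).
  rewrite h_hinv in Hle by exact I1.
  assert (E : h 1 = 1) by lra. split; [exact E|].
  rewrite <- E at 1. apply hinv_h, I1.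
Qed.

Lemma homeo_inv_increasing : strictly_increasing01 hinv.
Proof.
  intros a c Ha Hac Hc.
  pose proof (hinv_maps a ltac:(unfold I01; lra)).
  pose proof (hinv_maps c ltac:(unfold I01; lra)). unfold I01 in *.
  apply Rnot_le_lt. intros Hle.
  assert (Hq : h (hinv c) <= h (hinv a)) by (apply strictly_increasing01_le; auto; lra).
  rewrite !h_hinv in Hq by (unfold I01; lra). lra.
Qed.

Lemma conj_inverse psi : maps01 psi ->
  forall x, I01 x -> psi x = h (hinv (psi (h (hinv x)))).
Proof. intros Hpsi x Hx. rewrite (h_hinv x Hx). symmetry. apply h_hinv, Hpsi, Hx. Qed.

Lemma monotone_on_conj psi p q : maps01 psi -> 0 <= p -> p <= q -> q <= 1 ->
  monotone_on psi p q <-> monotone_on (fun x => hinv (psi (h x))) (hinv p) (hinv q).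
Proof.
  intros Hpsi Hp Hpq Hq.
  pose proof homeo_inv_increasing as hinv_incr.
  assert (h_nondecr : nondecr_on h 0 1)
    by (intros x y ? ? ?; apply strictly_increasing01_le; auto).
  assert (hinv_nondecr : nondecr_on hinv 0 1)
    by (intros x y ? ? ?; apply strictly_increasing01_le; auto).
  assert (Hip : 0 <= hinv p) by (apply hinv_maps; unfold I01; lra).
  assert (Hiq : hinv q <= 1) by (apply hinv_maps; unfold I01; lra).
  assert (Hipq : hinv p <= hinv q) by (apply hinv_nondecr; lra).
  split; intros Hmon.
  - apply (monotone_on_comp psi hinv h _ _ p q); auto.
    + intros x y ? ? ?. apply h_nondecr; lra.
    + intros x Hx. rewrite <- (h_hinv p), <- (h_hinv q) by (unfold I01; lra).
      split; apply h_nondecr; lra.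
    + intros x Hx. apply Hpsi. unfold I01; lra.
  - apply (monotone_on_ext (fun x => h (hinv (psi (h (hinv x)))))).
    + intros x Hx. assert (Ix : I01 x) by (unfold I01; lra).
      rewrite (h_hinv x Ix). apply h_hinv, Hpsi, Ix.
    + apply (monotone_on_comp (fun x => hinv (psi (h x))) h hinv _ _ (hinv p) (hinv q));
        auto.
      * intros x y ? ? ?. apply hinv_nondecr; lra.
      * intros x Hx. split; apply hinv_nondecr; lra.
      * intros x Hx. apply hinv_maps, Hpsi, h_maps. unfold I01; lra.
Qed.

Lemma monotone_laps_conj psi t : maps01 psi -> monotone_laps psi t ->
  monotone_laps (fun x => hinv (psi (h x))) t.
Proof.
  intros Hpsi [b [b0 [bt [Hinc [Hmon Hmax]]]]].
  pose proof (partition_in01 b t b0 bt Hinc) as Hb.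
  exists (fun i => hinv (b i)). split; [|split; [|split; [|split]]].
  - rewrite b0. apply homeo_fixes_0.
  - rewrite bt. apply homeo_fixes_1.
  - intros i Hi. pose proof (Hb i ltac:(lia)). pose proof (Hb (S i) ltac:(lia)).
    pose proof (Hinc i Hi). apply homeo_inv_increasing; lra.
  - intros i Hi. pose proof (Hb i ltac:(lia)). pose proof (Hb (S i) ltac:(lia)).
    pose proof (Hinc i Hi).
    apply (monotone_on_conj psi (b i) (b (S i))); try lra; auto.
  - intros i Hi Hm. apply (Hmax i Hi).
    pose proof (Hb i ltac:(lia)). pose proof (Hb (S (S i)) ltac:(lia)).
    assert (b i <= b (S (S i))) by (apply (partition_mono b t Hinc); lia).
    apply (monotone_on_conj psi (b i) (b (S (S i)))); auto; lra.
Qed.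

End IncreasingHomeomorphism.

Lemma monotone_laps_ext F G t : (forall x, I01 x -> F x = G x) ->
  monotone_laps F t -> monotone_laps G t.
Proof.
  intros E [b [b0 [bt [Hinc [Hmon Hmax]]]]].
  pose proof (partition_in01 b t b0 bt Hinc) as Hb.
  exists b. repeat split; auto.
  - intros i Hi. pose proof (Hb i ltac:(lia)). pose proof (Hb (S i) ltac:(lia)).
    apply (monotone_on_ext F); [intros x Hx; apply E; unfold I01; lra|auto].
  - intros i Hi Hm. apply (Hmax i Hi).
    pose proof (Hb i ltac:(lia)). pose proof (Hb (S (S i)) ltac:(lia)).
    apply (monotone_on_ext G); [intros x Hx; symmetry; apply E; unfold I01; lra|auto].
Qed.

Section ZigzagLaps.

(* The maximal laps of x |-> zigzag (n x) on [0,1] are exactly the n intervals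
   [k/n, (k+1)/n]: its monotone pieces are those avoiding the kinks k/n. *)
Variable n : nat.
Hypothesis n_pos : (0 < n)%nat.

Let M := INR n.
Let Z := fun x => zigzag (M * x).

Lemma M_pos : 0 < M.
Proof. apply lt_0_INR, n_pos. Qed.

Lemma monotone_piece_no_kink p q y k : monotone_on Z p q ->
  0 <= p -> p < y -> y < q -> q <= 1 -> M * y <> INR k.
Proof.
  intros Hmon Hp Hpy Hyq Hq Hk. pose proof M_pos as HM.
  destruct k as [|k].
  { simpl in Hk. assert (y = 0) by nra. lra. }
  set (e := Rmin (Rmin (y - p) (q - y)) (/ (2 * M))).
  assert (He : 0 < e).
  { unfold e. apply Rmin_glb_lt; [apply Rmin_glb_lt; lra|]. apply Rinv_0_lt_compat; lra. }
  assert (He1 : e <= y - p) by (unfold e; eapply Rle_trans; [apply Rmin_l|apply Rmin_l]).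
  assert (He2 : e <= q - y) by (unfold e; eapply Rle_trans; [apply Rmin_l|apply Rmin_r]).
  assert (He3 : M * e <= /2).
  { assert (Hinv : e <= / (2 * M)) by (unfold e; apply Rmin_r).
    apply Rmult_le_compat_l with (r := M) in Hinv; [|lra].
    replace (M * / (2 * M)) with (/2) in Hinv by (field; lra). exact Hinv. }
  assert (Hleft : 0 < Z (y - e) < 1).
  { apply (zigzag_interior k). rewrite S_INR in Hk. nra. }
  assert (Hright : 0 < Z (y + e) < 1) by (apply (zigzag_interior (S k)); nra).
  assert (Hmid : Z y = 0 \/ Z y = 1) by (unfold Z; rewrite Hk; apply zigzag_at_nat).
  destruct Hmon as [Hm|Hm].
  - assert (Z (y - e) <= Z y) by (apply Hm; lra).
    assert (Z y <= Z (y + e)) by (apply Hm; lra). lra.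
  - assert (Z y <= Z (y - e)) by (apply Hm; lra).
    assert (Z (y + e) <= Z y) by (apply Hm; lra). lra.
Qed.

Lemma no_kink_monotone p q : 0 <= p -> p <= q -> q <= 1 ->
  (forall k y, p < y < q -> M * y <> INR k) -> monotone_on Z p q.
Proof.
  intros Hp Hpq Hq Hno. pose proof M_pos as HM.
  destruct (nat_floor_exists (M * p)) as [j Hj]; [nra|].
  assert (HMq : M * q <= INR j + 1).
  { apply Rnot_lt_le. intros Hlt.
    apply (Hno (S j) (INR (S j) / M)); [|field; lra].
    rewrite S_INR. split; apply (Rmult_lt_reg_l M); try lra; field_simplify; lra. }
  assert (Hform : forall y, p <= y <= q ->
            Z y = if Nat.even j then M * y - INR j else INR j + 1 - M * y)
    by (intros y Hy; apply zigzag_on_lap; nra).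
  destruct (Nat.even j).
  - left. intros x y Hx Hxy Hy. rewrite !Hform by lra. nra.
  - right. intros x y Hx Hxy Hy. rewrite !Hform by lra. nra.
Qed.

Lemma kink_inside p q k : monotone_on Z p q -> 0 <= p -> q <= 1 ->
  M * p < INR k -> INR k < M * q -> False.
Proof.
  intros Hmon Hp Hq Hlo Hhi. pose proof M_pos as HM.
  apply (monotone_piece_no_kink p q (INR k / M) k Hmon Hp); try lra.
  - apply (Rmult_lt_reg_l M); [lra|]. field_simplify; lra.
  - apply (Rmult_lt_reg_l M); [lra|]. field_simplify; lra.
  - field. lra.
Qed.

Variable t : nat.
Variable b : nat -> R.
Hypothesis b0 : b 0%nat = 0.
Hypothesis bt : b t = 1.
Hypothesis b_incr : forall i, (i < t)%nat -> b i < b (S i).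
Hypothesis b_monotone : forall i, (i < t)%nat -> monotone_on Z (b i) (b (S i)).
Hypothesis b_maximal : forall i, (S i < t)%nat -> ~ monotone_on Z (b i) (b (S (S i))).

Lemma interior_breakpoint_kink i : (S i < t)%nat -> exists k, M * b (S i) = INR k.
Proof.
  intros Hi. pose proof (partition_in01 b t b0 bt b_incr) as Hb.
  pose proof (Hb i ltac:(lia)). pose proof (Hb (S i) ltac:(lia)).
  pose proof (Hb (S (S i)) ltac:(lia)).
  pose proof (b_incr i ltac:(lia)). pose proof (b_incr (S i) ltac:(lia)).
  apply NNPP. intros Hnot. apply (b_maximal i Hi), no_kink_monotone; try lra.
  intros k y Hy Hk. destruct (Rtotal_order y (b (S i))) as [Hl|[He|Hg]].
  - apply (monotone_piece_no_kink (b i) (b (S i)) y k); [apply b_monotone; lia|lra..].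
  - apply Hnot. exists k. subst y. exact Hk.
  - apply (monotone_piece_no_kink (b (S i)) (b (S (S i))) y k);
      [apply b_monotone; lia|lra..].
Qed.

(* Since no piece contains a kink inside, consecutive kinks are consecutive breakpoints. *)
Lemma breakpoint_at_kink i : (i < t)%nat -> M * b i = INR i.
Proof.
  pose proof (partition_in01 b t b0 bt b_incr) as Hb. pose proof M_pos as HM.
  induction i as [|i IH]; intros Hi; [rewrite b0; simpl; ring|].
  destruct (interior_breakpoint_kink i Hi) as [k Hk].
  specialize (IH ltac:(lia)).
  assert (Hb_lt : b i < b (S i)) by (apply b_incr; lia).
  assert (Hik : (i < k)%nat) by (apply INR_lt; nra).
  destruct (Nat.eq_dec k (S i)) as [->|Hne]; [exact Hk|exfalso].
  apply (kink_inside (b i) (b (S i)) (S i)); [apply b_monotone; lia|apply Hb; lia|apply Hb; lia| |].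
  - rewrite S_INR. lra.
  - rewrite Hk. apply lt_INR. lia.
Qed.

Lemma lap_count : n = t.
Proof.
  pose proof (partition_in01 b t b0 bt b_incr) as Hb. pose proof M_pos as HM.
  destruct (Nat.eq_dec t 0) as [E|Ht]; [rewrite E, b0 in bt; lra|].
  assert (Hlast : M * b (pred t) = INR (pred t)) by (apply breakpoint_at_kink; lia).
  assert (Hb_lt : b (pred t) < b (S (pred t))) by (apply b_incr; lia).
  replace (S (pred t)) with t in Hb_lt by lia. rewrite bt in Hb_lt.
  assert (Ht' : (pred t < n)%nat) by (apply INR_lt; fold M; nra).
  destruct (Nat.eq_dec n t) as [E|Hne]; [exact E|exfalso].
  apply (kink_inside (b (pred t)) (b t) t).
  - replace t with (S (pred t)) at 2 by lia. apply b_monotone; lia.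
  - apply Hb; lia.
  - rewrite bt; lra.
  - replace t with (S (pred t)) at 2 by lia. rewrite S_INR. lra.
  - rewrite bt, Rmult_1_r. apply lt_INR. lia.
Qed.

End ZigzagLaps.

Lemma zigzag_laps n t : (0 < n)%nat ->
  monotone_laps (fun x => zigzag (INR n * x)) t -> n = t.
Proof. intros Hn [b [b0 [bt [Hinc [Hmon Hmax]]]]]. eapply lap_count; eauto. Qed.

Lemma pow_half_pos n : 0 < (/2) ^ n.
Proof. apply pow_lt; lra. Qed.

Lemma pow_half_le1 n : (/2) ^ n <= 1.
Proof. induction n; simpl; [lra|]. pose proof (pow_half_pos n). lra. Qed.

Lemma pow_half_small e : 0 < e -> exists n, (/2) ^ n < e.
Proof.
  intros He.
  destruct (pow_lt_1_zero (/2)) with e as [N HN]; [rewrite Rabs_pos_eq; lra|exact He|].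
  exists N. specialize (HN N (le_n N)).
  rewrite Rabs_pos_eq in HN; [exact HN|apply pow_le; lra].
Qed.

(* A function on [0,2] that doubles under doubling and satisfies F w + F (1-w) = m
   is linear on [0,1]: both relations are contractions around w |-> m w. *)
Lemma doubling_symmetric_linear F m :
  (forall w, 0 <= w <= 1 -> F (2 * w) = 2 * F w) ->
  (forall w, 0 <= w <= 1 -> F w + F (1 - w) = m) ->
  (forall w, 0 <= w <= 1 -> 0 <= F w <= m) ->
  forall w, 0 <= w <= 1 -> F w = m * w.
Proof.
  intros Hdbl Hsym Hbnd.
  assert (Hm : 0 <= m) by (pose proof (Hbnd 0 ltac:(lra)); lra).
  assert (Hcontr : forall n w, 0 <= w <= 1 -> Rabs (F w - m * w) <= m * (/2) ^ n).
  { induction n as [|n IH]; intros w Hw.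
    - simpl. pose proof (Hbnd w Hw). unfold Rabs; destruct Rcase_abs; nra.
    - simpl pow. destruct (Rle_or_lt w (/2)) as [Hw2|Hw2].
      + replace (F w - m * w) with ((F (2 * w) - m * (2 * w)) / 2)
          by (rewrite Hdbl by lra; field).
        unfold Rdiv. rewrite Rabs_mult, (Rabs_pos_eq (/2)) by lra.
        pose proof (IH (2 * w) ltac:(lra)). nra.
      + assert (Ew : F w = m - F (2 - 2 * w) / 2).
        { replace (2 - 2 * w) with (2 * (1 - w)) by ring. rewrite Hdbl by lra.
          pose proof (Hsym w Hw). lra. }
        replace (F w - m * w) with (- ((F (2 - 2 * w) - m * (2 - 2 * w)) / 2))
          by (rewrite Ew; field).
        rewrite Rabs_Ropp. unfold Rdiv. rewrite Rabs_mult, (Rabs_pos_eq (/2)) by lra.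
        pose proof (IH (2 - 2 * w) ltac:(lra)). nra. }
  intros w Hw. destruct (Req_dec (F w - m * w) 0) as [Z|Z]; [lra|exfalso].
  pose proof (Rabs_pos_lt _ Z) as Hpos.
  destruct (pow_half_small (Rabs (F w - m * w) / (m + 1))) as [n Hn].
  { apply Rdiv_lt_0_compat; lra. }
  pose proof (Hcontr n w Hw). pose proof (pow_half_pos n).
  apply (Rmult_lt_compat_l (m + 1)) in Hn; [|lra].
  replace ((m + 1) * (Rabs (F w - m * w) / (m + 1))) with (Rabs (F w - m * w)) in Hn
    by (field; lra).
  nra.
Qed.

Lemma strictly_increasing01_nonneg A u : strictly_increasing01 A -> A 0 = 0 ->
  I01 u -> 0 <= A u.
Proof.
  intros HA H0 Hu. rewrite <- H0. unfold I01 in Hu.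
  apply strictly_increasing01_le; auto; lra.
Qed.

Section ZigzagLift.

(* Uniqueness of lifts: two increasing maps A, B with A 0 = B 0 = 0 and the same
   zigzag projection cross every integer at the same points, hence agree. *)
Variables A B : R -> R.
Hypothesis B_cont : continuous_on01 B.
Hypothesis A_incr : strictly_increasing01 A.
Hypothesis B_incr : strictly_increasing01 B.
Hypothesis A0 : A 0 = 0.
Hypothesis B0 : B 0 = 0.
Hypothesis same_projection : forall u, I01 u -> zigzag (A u) = zigzag (B u).

Lemma crossing_integer v k : I01 v -> B v = INR k -> exists m, A v = INR m.
Proof.
  intros Hv Bv. apply zigzag_extreme_at_nat; [apply strictly_increasing01_nonneg; auto|].
  rewrite same_projection, Bv by exact Hv. apply zigzag_at_nat.
Qed.

Lemma lift_below_integer k : forall u, I01 u -> A u <= INR k -> B u <= INR k.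
Proof.
  induction k as [|k IH]; intros u Hu HAu.
  - unfold I01 in Hu. destruct (Req_dec u 0) as [->|Hne]; [rewrite B0; simpl; lra|].
    exfalso. assert (A 0 < A u) by (apply A_incr; lra). simpl in HAu. lra.
  - apply Rnot_lt_le. intros HBu. pose proof (pos_INR (S k)). unfold I01 in Hu.
    destruct (IVT01 B 0 u (INR (S k)) B_cont) as [v [Hv Bv]]; try lra.
    assert (Hvu : v < u) by (destruct (Req_dec v u) as [->|]; lra).
    assert (HAv : A v < A u) by (apply A_incr; lra).
    destruct (crossing_integer v (S k)) as [m Hm]; [unfold I01; lra|exact Bv|].
    assert (Hmk : (m < S k)%nat) by (apply INR_lt; lra).
    assert (A v <= INR k) by (rewrite Hm; apply le_INR; lia).
    assert (B v <= INR k) by (apply IH; [unfold I01; lra|assumption]).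
    rewrite S_INR in Bv. lra.
Qed.

Lemma lift_strictly_below_integer k u : I01 u -> A u < INR k -> B u < INR k.
Proof.
  intros Hu HAu. apply Rnot_le_lt. intros HBu.
  pose proof (strictly_increasing01_nonneg A u A_incr A0 Hu).
  destruct k as [|k]; [simpl in HAu; lra|].
  pose proof (pos_INR (S k)). unfold I01 in Hu.
  destruct (IVT01 B 0 u (INR (S k)) B_cont) as [v [Hv Bv]]; try lra.
  assert (HAv : A v <= A u) by (apply strictly_increasing01_le; auto; lra).
  destruct (crossing_integer v (S k)) as [m Hm]; [unfold I01; lra|exact Bv|].
  assert (Hmk : (m < S k)%nat) by (apply INR_lt; lra).
  assert (A v <= INR k) by (rewrite Hm; apply le_INR; lia).
  assert (B v <= INR k) by (apply (lift_below_integer k v); [unfold I01; lra|assumption]).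
  rewrite S_INR in Bv. lra.
Qed.

End ZigzagLift.

(* Two continuous increasing lifts through the zigzag that start at 0 coincide:
   A u and B u lie in the same lap [j, j+1], on which the zigzag is injective. *)
Lemma zigzag_lift_unique A B : continuous_on01 A -> continuous_on01 B ->
  strictly_increasing01 A -> strictly_increasing01 B -> A 0 = 0 -> B 0 = 0 ->
  (forall u, I01 u -> zigzag (A u) = zigzag (B u)) ->
  forall u, I01 u -> A u = B u.
Proof.
  intros HcA HcB HA HB A0 B0 HT u Hu.
  destruct (nat_floor_exists (A u) (strictly_increasing01_nonneg A u HA A0 Hu)) as [j Hj].
  assert (Hhi : B u < INR (S j)).
  { apply (lift_strictly_below_integer A B); auto. rewrite S_INR; lra. }
  assert (Hlo : INR j <= B u).
  { apply Rnot_lt_le. intros Hb.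
    assert (A u < INR j) by (apply (lift_strictly_below_integer B A); auto; intros; symmetry; auto).
    lra. }
  rewrite S_INR in Hhi. apply (zigzag_inj_on_lap j); [lra|lra|apply HT, Hu].
Qed.

Lemma tent_half y : 0 <= y <= 1 -> tent (y / 2) = y.
Proof. intros. unfold tent, Rabs. destruct Rcase_abs; lra. Qed.

Lemma tent_reflect y : 0 <= y <= 1 -> tent (1 - y / 2) = y.
Proof. intros. unfold tent, Rabs. destruct Rcase_abs; lra. Qed.

Lemma tent_fixed_point c : tent c = c -> c = 0 \/ c = 2 / 3.
Proof. unfold tent, Rabs. destruct Rcase_abs; intros; [right|left]; lra. Qed.

Lemma tent_zero v : tent v = 0 -> v = 0 \/ v = 1.
Proof. unfold tent, Rabs. destruct Rcase_abs; intros; [right|left]; lra. Qed.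

Section CommutingWithTent.

Variable phi : R -> R.
Hypothesis phi_maps : maps01 phi.
Hypothesis phi_cont : continuous_on01 phi.
Hypothesis phi_comm : commutes_with_tent phi.

Lemma phi_half y : 0 <= y <= 1 -> phi y = tent (phi (y / 2)).
Proof. intros Hy. rewrite phi_comm by (unfold I01; lra). rewrite tent_half; auto. Qed.

Lemma phi_reflect y : 0 <= y <= 1 -> phi y = tent (phi (1 - y / 2)).
Proof. intros Hy. rewrite phi_comm by (unfold I01; lra). rewrite tent_reflect; auto. Qed.

(* Constancy near 0 spreads to all of [0,1] by repeated doubling. *)
Lemma const_near_0_global eps : 0 < eps ->
  (forall x, 0 <= x <= eps -> x <= 1 -> phi x = phi 0) -> forall x, I01 x -> phi x = phi 0.
Proof.
  intros He H.
  assert (Hscale : forall n x, 0 <= x <= 1 -> x * (/2) ^ n <= eps -> phi x = phi 0).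
  { induction n as [|n IH]; intros x Hx Hxe.
    - simpl in Hxe. apply H; lra.
    - rewrite (phi_half x Hx), IH; [| lra | simpl in Hxe; lra].
      rewrite phi_comm by (unfold I01; lra).
      replace (tent 0) with 0 by (unfold tent; rewrite Rabs_pos_eq; lra). reflexivity. }
  intros x Hx. destruct (pow_half_small eps He) as [n Hn].
  apply (Hscale n); [exact Hx|]. pose proof (pow_half_pos n). unfold I01 in Hx. nra.
Qed.

(* Constancy on an interval of length >= 2^-n propagates, after at most n steps of
   the tent map (each doubling the interval or reaching 1/2), to a neighbourhood of 0. *)
Lemma const_spread n : forall p q c, 0 <= p -> p < q -> q <= 1 -> q - p >= (/2) ^ n ->
  (forall x, p <= x <= q -> phi x = c) ->
  exists eps, 0 < eps /\ forall x, 0 <= x <= eps -> x <= 1 -> phi x = phi 0.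
Proof.
  induction n as [|n IH]; intros p q c Hp Hpq Hq Hl Hconst; simpl in Hl.
  - exists 1. split; [lra|]. intros x Hx _.
    rewrite (Hconst x), (Hconst 0) by lra. reflexivity.
  - destruct (Rle_or_lt q (/2)) as [Hq2|Hq2].
    + apply (IH (2 * p) (2 * q) (tent c)); try lra.
      intros x Hx. rewrite (phi_half x), (Hconst (x / 2)) by lra. reflexivity.
    + destruct (Rle_or_lt (/2) p) as [Hp2|Hp2].
      * apply (IH (2 - 2 * q) (2 - 2 * p) (tent c)); try lra.
        intros x Hx. rewrite (phi_reflect x), (Hconst (1 - x / 2)) by lra. reflexivity.
      * assert (Hupper : forall x, 2 * p <= x <= 1 -> phi x = tent c).
        { intros x Hx. rewrite (phi_half x), (Hconst (x / 2)) by lra. reflexivity. }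
        exists (Rmin 1 (2 - 4 * p)). split; [apply Rmin_glb_lt; lra|].
        intros x Hx Hx1. pose proof (Rmin_r 1 (2 - 4 * p)).
        rewrite (phi_reflect x), (Hupper (1 - x / 2)) by lra.
        rewrite (phi_reflect 0), (Hupper (1 - 0 / 2)) by lra. reflexivity.
Qed.

Lemma const_on_interval p q c : 0 <= p -> p < q -> q <= 1 ->
  (forall x, p <= x <= q -> phi x = c) -> forall x, I01 x -> phi x = phi 0.
Proof.
  intros Hp Hpq Hq H.
  destruct (pow_half_small (q - p)) as [n Hn]; [lra|].
  destruct (const_spread n p q c) as [e [He He']]; try lra; [exact H|].
  exact (const_near_0_global e He He').
Qed.

Lemma phi_zigzag_rescaled n x : 0 <= x <= 1 ->
  phi x = zigzag (phi (x * (/2) ^ n) / (/2) ^ n).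
Proof.
  revert x. induction n as [|n IH]; intros x Hx.
  - simpl. rewrite Rmult_1_r. unfold Rdiv. rewrite Rinv_1, Rmult_1_r.
    rewrite zigzag_id01; [reflexivity|apply phi_maps, Hx].
  - rewrite (phi_half x Hx), (IH (x / 2)) by lra.
    pose proof (pow_half_pos n). pose proof (pow_half_le1 n).
    assert (Ix : I01 (x / 2 * (/2) ^ n)) by (unfold I01; split; nra).
    rewrite <- zigzag_double.
    + f_equal. simpl pow. replace (x * (/2 * (/2) ^ n)) with (x / 2 * (/2) ^ n) by field.
      field. lra.
    + unfold Rdiv. apply Rmult_le_pos; [apply phi_maps, Ix|].
      left. apply Rinv_0_lt_compat. lra.
Qed.

Section Lift.

(* For s = 2^-N < d/2 the rescaled map L x = phi (s x) / s is an
   increasing lift of phi through the zigzag on [0, 2]; we show it is linear. *)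
Variable d : R.
Hypothesis phi_0 : phi 0 = 0.
Hypothesis d_range : 0 < d <= /2.
Hypothesis phi_incr_near_0 : forall x y, 0 <= x -> x < y -> y <= d -> phi x < phi y.
Hypothesis phi_double_near_0 : forall y, 0 <= y <= d -> phi (2 * y) = 2 * phi y.
Variable N : nat.
Hypothesis N_small : (/2) ^ N < d / 2.

Let s := (/2) ^ N.
Let L := fun x => phi (x * s) / s.

Lemma s_pos : 0 < s.
Proof. apply pow_half_pos. Qed.

Lemma lift_incr x y : 0 <= x -> x < y -> y <= 2 -> L x < L y.
Proof.
  intros Hx Hxy Hy. pose proof s_pos. unfold L, Rdiv.
  apply Rmult_lt_compat_r; [apply Rinv_0_lt_compat; lra|].
  apply phi_incr_near_0; fold s in N_small; nra.
Qed.

Lemma lift_le x y : 0 <= x -> x <= y -> y <= 2 -> L x <= L y.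
Proof. intros ? ? ?. destruct (Req_dec x y) as [->|]; [lra|]. left; apply lift_incr; lra. Qed.

Lemma lift_double x : 0 <= x <= 1 -> L (2 * x) = 2 * L x.
Proof.
  intros Hx. pose proof s_pos. fold s in N_small. unfold L.
  replace (2 * x * s) with (2 * (x * s)) by ring.
  rewrite phi_double_near_0 by nra. field. lra.
Qed.

Lemma lift_0 : L 0 = 0.
Proof. pose proof s_pos. unfold L. rewrite Rmult_0_l, phi_0. field. lra. Qed.

Lemma phi_zigzag_lift x : 0 <= x <= 1 -> phi x = zigzag (L x).
Proof. intros Hx. apply phi_zigzag_rescaled, Hx. Qed.

(* phi 1 = 0 or 1, since tent (phi 1) = phi 0 = 0; hence L 1 is an integer. *)
Lemma lift_1_nat : exists n, L 1 = INR n.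
Proof.
  apply zigzag_extreme_at_nat; [rewrite <- lift_0; apply lift_le; lra|].
  rewrite <- phi_zigzag_lift by lra. apply tent_zero.
  rewrite phi_comm by (unfold I01; lra).
  replace (tent 1) with 0 by (unfold tent; rewrite Rabs_left; lra). exact phi_0.
Qed.

(* L u and 2 L 1 - L (2 - u) are increasing lifts of the same map, hence equal. *)
Lemma lift_reflect u : I01 u -> L u = 2 * L 1 - L (2 - u).
Proof.
  pose proof s_pos as Hs. destruct lift_1_nat as [n Hn].
  apply (zigzag_lift_unique L (fun u => 2 * L 1 - L (2 - u))).
  - apply (continuous_on01_ext (fun u => 0 + / s * phi (s * u + 0)));
      [apply continuous_on01_affine; [exact phi_cont|]|].
    + intros v Hv. fold s in N_small. unfold I01 in *. split; nra.
    + intros x _. unfold L. replace (s * x + 0) with (x * s) by ring. field. lra.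
  - apply (continuous_on01_ext (fun u => 2 * L 1 + (- / s) * phi ((- s) * u + 2 * s)));
      [apply continuous_on01_affine; [exact phi_cont|]|].
    + intros v Hv. fold s in N_small. unfold I01 in *. split; nra.
    + intros x _. unfold L. replace (- s * x + 2 * s) with ((2 - x) * s) by ring.
      field. lra.
  - intros x y ? ? ?. apply lift_incr; lra.
  - intros x y ? ? ?. cbv beta. pose proof (lift_incr (2 - y) (2 - x)). lra.
  - exact lift_0.
  - replace (2 - 0) with (2 * 1) by ring. rewrite lift_double by lra. ring.
  - intros v Hv. unfold I01 in Hv. cbv beta.
    rewrite <- phi_zigzag_lift by lra. rewrite Hn, zigzag_reflect.
    2:{ rewrite <- Hn. split; [rewrite <- lift_0; apply lift_le; lra|].
        rewrite <- lift_double by lra. apply lift_le; lra. }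
    replace (2 - v) with (2 * (1 - v / 2)) by field.
    rewrite lift_double, zigzag_double by (try (rewrite <- lift_0; apply lift_le); lra).
    rewrite <- phi_zigzag_lift by lra. apply phi_reflect. lra.
Qed.

(* Reflection at 2w, read through doubling, gives the symmetry L w + L (1-w) = L 1. *)
Lemma lift_symmetric w : 0 <= w <= 1 -> L w + L (1 - w) = L 1.
Proof.
  assert (Hhalf : forall w, 0 <= w <= /2 -> L w + L (1 - w) = L 1).
  { intros v Hv. pose proof (lift_reflect (2 * v) ltac:(unfold I01; lra)) as H.
    rewrite lift_double in H by lra. replace (2 - 2 * v) with (2 * (1 - v)) in H by ring.
    rewrite lift_double in H by lra. lra. }
  intros Hw. destruct (Rle_or_lt w (/2)); [apply Hhalf; lra|].
  pose proof (Hhalf (1 - w) ltac:(lra)). replace (1 - (1 - w)) with w in * by ring. lra.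
Qed.

Lemma phi_zigzag_linear_lift : (exists n, (0 < n)%nat /\
  forall x, I01 x -> phi x = zigzag (INR n * x)).
Proof.
  destruct lift_1_nat as [n Hn]. exists n. split.
  - apply INR_lt. rewrite <- Hn. simpl. rewrite <- lift_0. apply lift_incr; lra.
  - intros x Hx. unfold I01 in Hx. rewrite phi_zigzag_lift by lra. f_equal.
    rewrite <- Hn. apply doubling_symmetric_linear; [exact lift_double| exact lift_symmetric| |lra].
    intros w Hw. split; [rewrite <- lift_0|]; apply lift_le; lra.
Qed.

End Lift.

Lemma phi_close_to_0 eps r : 0 < eps -> 0 < r ->
  exists d, 0 < d /\ d <= r /\ d <= /2 /\
    forall y, 0 <= y <= d -> Rabs (phi y - phi 0) < eps.
Proof.
  intros He Hr. destruct (phi_cont 0 ltac:(unfold I01; lra) eps He) as [d0 [Hd0 Hclose]].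
  exists (Rmin (Rmin (d0 / 2) r) (/2)). split; [|split; [|split]].
  - repeat apply Rmin_glb_lt; lra.
  - eapply Rle_trans; [apply Rmin_l|apply Rmin_r].
  - apply Rmin_r.
  - intros y Hy. pose proof (Rmin_l (Rmin (d0 / 2) r) (/2)).
    pose proof (Rmin_r (Rmin (d0 / 2) r) (/2)). pose proof (Rmin_l (d0 / 2) r).
    apply Hclose; [unfold I01; lra|]. rewrite Rminus_0_r, Rabs_pos_eq; lra.
Qed.

Hypothesis phi_nonconst : ~ (forall x, I01 x -> phi x = phi 0).

(* phi 0 is a fixed point of the tent map; the fixed point 2/3 is excluded because
   there phi (2y) = 2 - 2 phi y near 0, incompatible with monotonicity near 0
   unless phi is constant there. *)
Lemma phi_fixes_0 c1 : 0 < c1 <= 1 -> monotone_on phi 0 c1 -> phi 0 = 0.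
Proof.
  intros Hc1 Hmon.
  assert (Hfix : tent (phi 0) = phi 0).
  { rewrite phi_comm by (unfold I01; lra). f_equal. unfold tent. rewrite Rabs_pos_eq; lra. }
  destruct (tent_fixed_point _ Hfix) as [E|E]; [exact E|exfalso].
  destruct (phi_close_to_0 (/6) c1) as [d [Hd [Hdc [_ Hclose]]]]; [lra|lra|].
  assert (Hdbl : forall y, 0 <= y <= d / 2 -> phi (2 * y) = 2 - 2 * phi y).
  { intros y Hy. rewrite (phi_half (2 * y)) by lra.
    replace (2 * y / 2) with y by field. pose proof (Hclose y ltac:(lra)) as Hy'.
    rewrite E in Hy'. unfold tent, Rabs in *. repeat destruct Rcase_abs; lra. }
  apply phi_nonconst, (const_near_0_global (d / 2)); [lra|].
  intros x Hx _. rewrite E. pose proof (Hdbl x Hx).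
  destruct Hmon as [Hn|Hn].
  - assert (phi 0 <= phi x) by (apply Hn; lra).
    assert (phi 0 <= phi (2 * x)) by (apply Hn; lra). lra.
  - assert (phi x <= phi 0) by (apply Hn; lra).
    assert (phi (2 * x) <= phi 0) by (apply Hn; lra). lra.
Qed.

(* Near 0, phi is strictly increasing (no plateaus, and not decreasing from phi 0 = 0)
   and small, so the commutation relation reads phi (2 y) = 2 phi y. *)
Lemma phi_near_0 c1 : 0 < c1 <= 1 -> monotone_on phi 0 c1 -> phi 0 = 0 ->
  exists d, 0 < d <= /2 /\
    (forall x y, 0 <= x -> x < y -> y <= d -> phi x < phi y) /\
    (forall y, 0 <= y <= d -> phi (2 * y) = 2 * phi y).
Proof.
  intros Hc1 Hmon E.
  assert (Hnd : nondecr_on phi 0 c1).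
  { destruct Hmon as [Hn|Hn]; [exact Hn|exfalso].
    apply phi_nonconst, (const_near_0_global c1); [lra|].
    intros x Hx Hx1. assert (phi x <= phi 0) by (apply Hn; lra).
    assert (0 <= phi x) by (apply phi_maps; unfold I01; lra). lra. }
  destruct (phi_close_to_0 (/2) c1) as [d [Hd [Hdc [Hd2 Hclose]]]]; [lra|lra|].
  assert (Hsmall : forall y, 0 <= y <= d -> 0 <= phi y <= /2).
  { intros y Hy. pose proof (Hclose y Hy). pose proof (phi_maps y ltac:(unfold I01; lra)).
    rewrite E in *. unfold I01, Rabs in *. destruct Rcase_abs; lra. }
  exists d. split; [lra|split].
  - intros x y Hx Hxy Hy. assert (Hle : phi x <= phi y) by (apply Hnd; lra).
    destruct (Req_dec (phi x) (phi y)) as [Eq|Ne]; [exfalso|lra].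
    apply phi_nonconst, (const_on_interval x y (phi x)); try lra.
    intros z Hz. assert (phi x <= phi z) by (apply Hnd; lra).
    assert (phi z <= phi y) by (apply Hnd; lra). lra.
  - intros y Hy. rewrite (phi_half (2 * y)) by lra.
    replace (2 * y / 2) with y by field. pose proof (Hsmall y Hy).
    unfold tent. rewrite Rabs_pos_eq; lra.
Qed.

Lemma commuting_zigzag_multiple c1 : 0 < c1 <= 1 -> monotone_on phi 0 c1 ->
  exists n, (0 < n)%nat /\ forall x, I01 x -> phi x = zigzag (INR n * x).
Proof.
  intros Hc1 Hmon. pose proof (phi_fixes_0 c1 Hc1 Hmon) as E.
  destruct (phi_near_0 c1 Hc1 Hmon E) as [d [Hd [Hincr Hdbl]]].
  destruct (pow_half_small (d / 2)) as [N HN]; [lra|].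
  exact (phi_zigzag_linear_lift d E Hd Hincr Hdbl N HN).
Qed.

Lemma commuting_laps t : monotone_laps phi t ->
  forall x, I01 x -> phi x = zigzag (INR t * x).
Proof.
  intros Hlaps. pose proof Hlaps as [b [b0 [bt [Hinc [Hmon _]]]]].
  assert (Ht : (0 < t)%nat) by (destruct t; [rewrite b0 in bt; lra|lia]).
  assert (Hb1 : 0 < b 1%nat <= 1).
  { split; [rewrite <- b0; apply Hinc, Ht|].
    rewrite <- bt. apply (partition_mono b t Hinc); lia. }
  assert (Hmon1 : monotone_on phi 0 (b 1%nat)) by (rewrite <- b0; apply Hmon, Ht).
  destruct (commuting_zigzag_multiple (b 1%nat) Hb1 Hmon1) as [n [Hn Hphi]].
  assert (n = t) by (apply zigzag_laps; [exact Hn|apply (monotone_laps_ext phi); auto]).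
  subst n. exact Hphi.
Qed.

End CommutingWithTent.

Theorem lemma4p1 (g h hinv psi : R -> R) (t : nat) :
  maps01 g -> unimodal g -> piecewise_linear01 g ->
  homeo01 h hinv ->
  (forall x, I01 x -> h (tent x) = g (h x)) ->
  maps01 psi -> continuous_on01 psi ->
  (exists x y, I01 x /\ I01 y /\ psi x <> psi y) ->
  (forall x, I01 x -> g (psi x) = psi (g x)) ->
  (1 <= t)%nat -> monotone_laps psi t ->
  forall x, I01 x -> psi x = h (xi t (hinv x)).
Proof.
  intros _ [_ [_ [_ [_ [g0 _]]]]] _ Hhomeo Hconj psi_maps psi_cont
    [x0 [y0 [Hx0 [Hy0 Hne]]]] Hcomm _ Hlaps x Hx.
  pose proof Hhomeo as [h_maps [hinv_maps [hinv_h [h_hinv [h_cont hinv_cont]]]]].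
  pose proof (conjugacy_increasing g h hinv Hhomeo g0 Hconj) as h_incr.
  set (phi := fun y => hinv (psi (h y))).
  assert (phi_maps : maps01 phi) by (intros y Hy; apply hinv_maps, psi_maps, h_maps, Hy).
  assert (phi_cont : continuous_on01 phi).
  { apply (continuous_on01_comp hinv (fun y => psi (h y))); auto.
    - apply continuous_on01_comp; auto.
    - intros y Hy. apply psi_maps, h_maps, Hy. }
  assert (phi_nonconst : ~ (forall y, I01 y -> phi y = phi 0)).
  { intros Hconst. apply Hne.
    rewrite (conj_inverse h hinv h_hinv psi psi_maps x0 Hx0),
      (conj_inverse h hinv h_hinv psi psi_maps y0 Hy0).
    fold (phi (hinv x0)) (phi (hinv y0)).
    rewrite (Hconst (hinv x0)), (Hconst (hinv y0)) by auto. reflexivity. }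
  assert (phi_laps : monotone_laps phi t) by (apply monotone_laps_conj; auto).
  assert (phi_comm : commutes_with_tent phi)
    by exact (conj_commutes g h hinv psi Hhomeo psi_maps Hconj Hcomm).
  rewrite (conj_inverse h hinv h_hinv psi psi_maps x Hx), xi_zigzag. fold (phi (hinv x)).
  rewrite (commuting_laps phi phi_maps phi_cont phi_comm phi_nonconst t phi_laps) by auto.
  reflexivity.
Qed.
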